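(* Let $(\bar z_1,\bar z_2)\in\mathbb R^d\times\mathbb R^d$. Then $(\bar z_1,\bar z_2)\in \operatorname{Fix} T_{\gamma}^{\mathrm{Ryu}} := \{(z_1,z_2): (z_1,z_2)\in T_{\gamma}^{\mathrm{Ryu}}(z_1,z_2)\}$ if and only if $\bar x := \bar x_1=\bar x_2=\bar x_3$, where $$\bar x_1=\operatorname{prox}_{\gamma f_1}(\bar z_1),\quad \bar x_2=\operatorname{prox}_{\frac{\gamma}{\alpha} f_2}\Big(\tfrac{\bar z_2}{\alpha}+\bar x_1\Big),\quad \bar x_3\in \operatorname{prox}_{\gamma f_3}(\bar x_1-\bar z_1+\bar x_2-\bar z_2).$$ Furthermore, such $\bar x$ is a critical point of $\varphi$ (i.e. $0\in\partial\varphi(\bar x)$), and $\varphi(\bar x)=\varphi_{\gamma}^{\mathrm{Ryu}}(\bar z_1,\bar z_2)$. In particular, if $\alpha\in(0,1)$ and $\gamma\le \min\{\frac{\alpha}{L_1},\frac{1-\alpha}{L_2}\}$, then $\min\varphi=\min\varphi_{\gamma}^{\mathrm{Ryu}}$.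
   Context: Let $f_1,f_2:\mathbb R^d\to\mathbb R$ be convex and $L_i$-smooth (i.e. differentiable with $\nabla f_i$ globally $L_i$-Lipschitz, $L_i>0$), let $f_3:\mathbb R^d\to\mathbb R\cup\{+\infty\}$ be proper and lower semicontinuous, and suppose the problem $\min_{x\in\mathbb R^d}\varphi(x):=f_1(x)+f_2(x)+f_3(x)$ has a nonempty set of solutions. For a function $g$ and $\gamma>0$, $\operatorname{prox}_{\gamma g}(z):=\operatorname{argmin}_{y}\{g(y)+\frac{1}{2\gamma}\|y-z\|^2\}$. Let $\gamma\in(0,\frac{1}{L_1+L_2})$ and $\alpha,\lambda>0$. For $(z_1,z_2)\in\mathbb R^d\times\mathbb R^d$ define $x_1=\operatorname{prox}_{\gamma f_1}(z_1)$, $x_2=\operatorname{prox}_{\frac{\gamma}{\alpha}f_2}(\frac{z_2}{\alpha}+x_1)$, $x_3\in\operatorname{prox}_{\gamma f_3}(x_1-z_1+x_2-z_2)$, and the set-valued operator $T_{\gamma}^{\mathrm{Ryu}}(z_1,z_2)=\{(z_1+\lambda(x_3-x_1),\,z_2+\lambda(x_3-x_2))\}$ over such choices of $x_3$. With $\gamma_1:=\frac{\gamma}{\alpha}$, $\gamma_2:=\frac{\gamma}{1-\alpha}$ (convention $c/0=\infty$, $d/\infty=0$), the relaxed Ryu envelope is $$\varphi_{\gamma}^{\mathrm{Ryu}}(z_1,z_2):=\min_{y\in\mathbb R^d}\Big\{f_3(y)+\sum_{i=1}^2\Big[f_i(x_i)+\langle y-x_i,\nabla f_i(x_i)\rangle+\tfrac{1}{2\gamma_i}\|y-x_i\|^2\Big]\Big\}.$$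 $\partial$ denotes the limiting subdifferential. *)

From mathcomp Require Import all_boot all_order all_algebra.
From mathcomp Require Import boolp classical_sets reals constructive_ereal ereal.
Set Implicit Arguments.
Unset Strict Implicit.
Unset Printing Implicit Defensive.
Import Order.TTheory GRing.Theory Num.Theory.
Local Open Scope ring_scope.
Local Open Scope classical_set_scope.

Section RyuDefs.
Variables (R : realType) (d : nat).
Local Notation vec := 'rV[R]_d.

Definition dotp (u v : vec) : R := \sum_(i < d) u 0 i * v 0 i.
Definition enorm (u : vec) : R := Num.sqrt (dotp u u).

Definition convex_fun (f : vec -> R) : Prop :=
  forall (x y : vec) (t : R), 0 <= t -> t <= 1 ->
    f (t *: x + (1 - t) *: y) <= t * f x + (1 - t) * f y.

Definition has_gradient (f : vec -> R) (g x : vec) : Prop :=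
  forall eps : R, 0 < eps -> exists2 delta : R, 0 < delta &
    forall y : vec, enorm (y - x) < delta ->
      `|f y - f x - dotp g (y - x)| <= eps * enorm (y - x).

Definition smooth_with (f : vec -> R) (grad : vec -> vec) (L : R) : Prop :=
  (forall x, has_gradient f (grad x) x) /\
  (forall x y, enorm (grad x - grad y) <= L * enorm (x - y)).

Definition proper_fun (g : vec -> \bar R) : Prop :=
  (forall x, g x <> -oo%E) /\ (exists x, g x <> +oo%E).

Definition lsc_fun (g : vec -> \bar R) : Prop :=
  forall (x : vec) (t : R), (t%:E < g x)%E ->
    exists2 delta : R, 0 < delta &
      forall y, enorm (y - x) < delta -> (t%:E < g y)%E.

(* prox_{gam g}(z) as the (possibly empty / multivalued) argmin set *)
Definition prox_e (g : vec -> \bar R) (gam : R) (z : vec) : set vec :=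
  [set y | forall y' : vec,
     (g y + (dotp (y - z) (y - z) / (2 * gam))%:E <=
      g y' + (dotp (y' - z) (y' - z) / (2 * gam))%:E)%E].

Definition prox (f : vec -> R) (gam : R) (z : vec) : set vec :=
  prox_e (fun y => (f y)%:E) gam z.

Definition seq_cvg (xs : nat -> vec) (x : vec) : Prop :=
  forall eps : R, 0 < eps -> exists N : nat, forall k : nat, (N <= k)%N ->
    enorm (xs k - x) < eps.

Definition frechet_subgrad (g : vec -> \bar R) (x v : vec) : Prop :=
  g x \is a fin_num /\
  forall eps : R, 0 < eps -> exists2 delta : R, 0 < delta &
    forall y, enorm (y - x) < delta ->
      ((fine (g x) + dotp v (y - x) - eps * enorm (y - x))%:E <= g y)%E.

Definition limiting_subgrad (g : vec -> \bar R) (x v : vec) : Prop :=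
  g x \is a fin_num /\
  exists (xs vs : nat -> vec),
    (forall k, frechet_subgrad g (xs k) (vs k)) /\
    seq_cvg xs x /\ seq_cvg vs v /\
    (forall eps : R, 0 < eps -> exists N : nat, forall k : nat, (N <= k)%N ->
       `|fine (g (xs k)) - fine (g x)| < eps).

Definition phi (f1 f2 : vec -> R) (f3 : vec -> \bar R) (x : vec) : \bar R :=
  ((f1 x)%:E + (f2 x)%:E + f3 x)%E.

Definition ryu_T (f1 f2 : vec -> R) (f3 : vec -> \bar R) (gam alpha lam : R)
  (z : vec * vec) : set (vec * vec) :=
  [set p | exists x1 x2 x3 : vec,
     prox f1 gam z.1 x1 /\
     prox f2 (gam / alpha) (alpha^-1 *: z.2 + x1) x2 /\
     prox_e f3 gam (x1 - z.1 + x2 - z.2) x3 /\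
     p = (z.1 + lam *: (x3 - x1), z.2 + lam *: (x3 - x2))].

Definition fixpoints (T : vec * vec -> set (vec * vec)) : set (vec * vec) :=
  [set z | T z z].

(* relaxed Ryu envelope, evaluated at the prox points x1 = x1(z), x2 = x2(z);
   1/(2 gam_1) = alpha/(2 gam), 1/(2 gam_2) = (1 - alpha)/(2 gam)
   (consistent with the conventions c/0 = oo, d/oo = 0). *)
Definition ryu_env (f1 f2 : vec -> R) (f3 : vec -> \bar R) (grad1 grad2 : vec -> vec)
  (gam alpha : R) (x1 x2 : vec) : \bar R :=
  ereal_inf [set (f3 y +
     (f1 x1 + dotp (y - x1) (grad1 x1) + alpha / (2 * gam) * dotp (y - x1) (y - x1)
      + (f2 x2 + dotp (y - x2) (grad2 x2)
         + (1 - alpha) / (2 * gam) * dotp (y - x2) (y - x2)))%:E)%E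
    | y in [set: vec]].

End RyuDefs.

(* The prox of a convex differentiable function is single-valued, so (z1, z2)
   is fixed by the Ryu operator exactly when the three prox points coincide.
   At such a point x the optimality conditions of the two smooth proxes give
   z1 = x + gam grad f1(x) and z2 = gam grad f2(x), so x is a forward-backward
   fixed point of f3 with step gam: adding the gradient inequalities of f1 and
   f2 makes 0 a Frechet (hence limiting) subgradient of phi at x, and the
   quadratic model defining the envelope is minimal at y = x, where it equals
   phi x.  Under gam <= alpha / L1 and gam <= (1 - alpha) / L2 the descent
   lemma shows that every model dominates phi, so the envelope is bounded by
   min phi, and a minimizer of phi is such a fixed point, attaining the bound. *)

From mathcomp Require Import all_boot all_order all_algebra.
From mathcomp Require Import boolp classical_sets reals constructive_ereal ereal.
From mathcomp Require Import ring lra.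
Import Order.TTheory GRing.Theory Num.Theory.
Local Open Scope ring_scope.
Local Open Scope classical_set_scope.

Section Euclidean.
Context {R : realType} {d : nat}.
Local Notation vec := 'rV[R]_d.
Implicit Types (u v w x y z : vec) (f : vec -> R).

Lemma dotpC u v : dotp u v = dotp v u.
Proof. by apply: eq_bigr => i _; rewrite mulrC. Qed.

Lemma dotpDl u v w : dotp (u + v) w = dotp u w + dotp v w.
Proof. by rewrite /dotp -big_split; apply: eq_bigr => i _; rewrite !mxE mulrDl. Qed.

Lemma dotpZl a u w : dotp (a *: u) w = a * dotp u w.
Proof. by rewrite /dotp mulr_sumr; apply: eq_bigr => i _; rewrite !mxE mulrA. Qed.

Lemma dotpNl u w : dotp (- u) w = - dotp u w.
Proof. by rewrite -scaleN1r dotpZl mulN1r. Qed.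

Lemma dotpBl u v w : dotp (u - v) w = dotp u w - dotp v w.
Proof. by rewrite dotpDl dotpNl. Qed.

Lemma dotpDr u v w : dotp w (u + v) = dotp w u + dotp w v.
Proof. by rewrite !(dotpC w) dotpDl. Qed.

Lemma dotpZr a u w : dotp w (a *: u) = a * dotp w u.
Proof. by rewrite !(dotpC w) dotpZl. Qed.

Lemma dotpNr u w : dotp w (- u) = - dotp w u.
Proof. by rewrite !(dotpC w) dotpNl. Qed.

Lemma dotpBr u v w : dotp w (u - v) = dotp w u - dotp w v.
Proof. by rewrite !(dotpC w) dotpBl. Qed.

Lemma dotp0l w : dotp 0 w = 0.
Proof. by rewrite -(scale0r 0) dotpZl mul0r. Qed.

Lemma dotp_ge0 u : 0 <= dotp u u.
Proof. by apply: sumr_ge0 => i _; rewrite -expr2 sqr_ge0. Qed.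

Lemma dotp_eq0 u : dotp u u = 0 -> u = 0.
Proof.
move=> /eqP; rewrite psumr_eq0 => [/allP u0|i _]; last by rewrite -expr2 sqr_ge0.
apply/rowP => i; rewrite mxE.
by have := u0 i (mem_index_enum i); rewrite /= mulf_eq0 orbb => /eqP.
Qed.

Lemma dotp_sqrD u v : dotp (u + v) (u + v) = dotp u u + 2 * dotp u v + dotp v v.
Proof. by rewrite dotpDl !dotpDr (dotpC v u); ring. Qed.

Lemma half_dist2_shift x y g (s : R) : 0 < s ->
  dotp (y - (x - s *: g)) (y - (x - s *: g)) / (2 * s) =
  dotp (y - x) g + dotp (y - x) (y - x) / (2 * s) + s * dotp g g / 2.
Proof.
move=> s0; have -> : y - (x - s *: g) = (y - x) + s *: g by rewrite opprB addrCA addrC.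
by rewrite dotp_sqrD dotpZl !dotpZr; field; rewrite gt_eqF.
Qed.

Lemma enorm_ge0 u : 0 <= enorm u.
Proof. exact: sqrtr_ge0. Qed.

Lemma enorm_sqr u : enorm u ^+ 2 = dotp u u.
Proof. by rewrite sqr_sqrtr // dotp_ge0. Qed.

Lemma enorm0 : enorm (0 : vec) = 0.
Proof. by rewrite /enorm dotp0l sqrtr0. Qed.

Lemma enormZ a u : enorm (a *: u) = `|a| * enorm u.
Proof.
by rewrite /enorm dotpZl dotpZr mulrA -expr2 sqrtrM ?sqr_ge0 // sqrtr_sqr.
Qed.

Lemma dotp_le_of_enorm_le {u v} {c : R} : 0 < c -> enorm u <= c * enorm v ->
  dotp u v <= c * dotp v v.
Proof.
move=> c0 uv; have uu : dotp u u <= c ^+ 2 * dotp v v.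
  rewrite -!enorm_sqr -exprMn ler_pXn2r // nnegrE ?enorm_ge0 //.
  by rewrite mulr_ge0 ?enorm_ge0 ?ltW.
have := dotp_ge0 (u - c *: v).
rewrite !dotpBl !dotpBr !dotpZl !dotpZr (dotpC v u) => uv0.
rewrite expr2 in uu.
have : c * (2 * dotp u v) <= c * (2 * (c * dotp v v)) by lra.
by rewrite ler_pM2l // ler_pM2l.
Qed.

Lemma small_step_exists {b nu : R} : 0 < b -> 0 <= nu ->
  exists t, [/\ 0 < t, t <= 1 & t * nu < b].
Proof.
move=> b0 nu0; have nu1 : 0 < nu + 1 by rewrite ltr_wpDl.
exists (Num.min 1 (b / (nu + 1))); split; first by rewrite lt_min ltr01 divr_gt0.
  by rewrite ge_min lexx.
apply: (@le_lt_trans _ _ (b / (nu + 1) * nu)).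
  by rewrite ler_wpM2r // ge_min lexx orbT.
by rewrite mulrAC ltr_pdivrMr //; nra.
Qed.

Lemma has_gradientD {f h g k x} : has_gradient f g x -> has_gradient h k x ->
  has_gradient (fun y => f y + h y) (g + k) x.
Proof.
move=> hf hh e e0; have e20 : 0 < e / 2 by rewrite divr_gt0.
have [df df0 Hf] := hf _ e20; have [dh dh0 Hh] := hh _ e20.
exists (Num.min df dh); first by rewrite lt_min df0.
move=> y; rewrite lt_min => /andP[/Hf {}Hf /Hh {}Hh].
have -> : f y + h y - (f x + h x) - dotp (g + k) (y - x) =
    (f y - f x - dotp g (y - x)) + (h y - h x - dotp k (y - x)).
  by rewrite dotpDl; ring.
by apply: le_trans (ler_normD _ _) _; lra.
Qed.

Lemma half_dist2_le {u} {s e : R} : 0 < s -> enorm u < 2 * s * e ->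
  dotp u u / (2 * s) <= e * enorm u.
Proof.
move=> s0 ue; rewrite -enorm_sqr ler_pdivrMr ?mulr_gt0 //.
by have := enorm_ge0 u; nra.
Qed.

Lemma has_gradient_half_dist2 x z {s : R} : 0 < s ->
  has_gradient (fun y => dotp (y - z) (y - z) / (2 * s)) (s^-1 *: (x - z)) x.
Proof.
move=> s0 e e0; exists (2 * s * e); first by rewrite !mulr_gt0.
move=> y yx; have -> : y - z = (y - x) + (x - z) by rewrite addrA subrK.
rewrite dotp_sqrD dotpZl (dotpC (x - z)).
have -> : (dotp (y - x) (y - x) + 2 * dotp (y - x) (x - z) + dotp (x - z) (x - z))
    / (2 * s) - dotp (x - z) (x - z) / (2 * s) - s^-1 * dotp (y - x) (x - z) =
    enorm (y - x) ^+ 2 / (2 * s) by rewrite enorm_sqr; field; rewrite gt_eqF.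
have s20 : 0 < 2 * s by rewrite mulr_gt0.
rewrite ger0_norm; last by rewrite divr_ge0 ?exprn_ge0 ?enorm_ge0 ?ltW.
by rewrite enorm_sqr half_dist2_le.
Qed.

Lemma minimizer_gradient_eq0 {F : vec -> R} {g x} :
  (forall y, F x <= F y) -> has_gradient F g x -> g = 0.
Proof.
move=> xmin hF; apply: dotp_eq0; apply/eqP; rewrite eq_le dotp_ge0 andbT.
rewrite leNgt; apply/negP => g0.
have nu0 : 0 < enorm g by rewrite /enorm sqrtr_gt0.
have [delta delta0 Hd] := hF _ (divr_gt0 nu0 (ltr0Sn _ 1)).
have [t [t0 _ tnu]] := small_step_exists delta0 (ltW nu0).
(* a short step along [- g] strictly decreases [F] *)
set y := x + (- t) *: g; have yx : y - x = (- t) *: g by rewrite addrC addKr.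
have := Hd y; rewrite yx enormZ normrN gtr0_norm // => /(_ tnu) /ler_normlP[_].
have := xmin y; have : 0 < t * (enorm g * enorm g) by rewrite !mulr_gt0.
rewrite dotpZr -(enorm_sqr g) expr2; lra.
Qed.

Lemma prox_gradE {f g} {s : R} {x z} : 0 < s ->
  has_gradient f g x -> prox f s z x -> z - x = s *: g.
Proof.
move=> s0 hf xprox.
have xmin y : f x + dotp (x - z) (x - z) / (2 * s) <= f y + dotp (y - z) (y - z) / (2 * s).
  by have := xprox y; rewrite -!EFinD lee_fin.
have /(congr1 (GRing.scale s)) := minimizer_gradient_eq0
  xmin (has_gradientD hf (has_gradient_half_dist2 x z s0)).
rewrite scaler0 scalerDr scalerA mulfV ?gt_eqF // scale1r => /eqP.
by rewrite addr_eq0 opprB => /eqP ->.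
Qed.

Lemma convex_grad_ineq {f g} x {y} : convex_fun f -> has_gradient f g y ->
  f y + dotp g (x - y) <= f x.
Proof.
move=> cf hg; set u := x - y; set nu := enorm u; have nu0 : 0 <= nu := enorm_ge0 u.
apply/ler_addgt0Pr => e e0; have nu1 : 0 < nu + 1 by rewrite ltr_wpDl.
have [delta delta0 Hd] := hg _ (divr_gt0 e0 nu1).
have [t [t0 t1 tnu]] := small_step_exists delta0 nu0.
have yt : y + t *: u - y = t *: u by rewrite addrC addKr.
have := Hd (y + t *: u); rewrite yt enormZ gtr0_norm // => /(_ tnu) /ler_normlP[+ _].
have := cf x y t (ltW t0) t1.
have -> : t *: x + (1 - t) *: y = y + t *: u by rewrite scalerBl scale1r scalerBr addrCA.
rewrite dotpZr -/nu => conv grad.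
have : t * (dotp g u - (f x - f y)) <= t * (e / (nu + 1) * nu) by lra.
rewrite ler_pM2l // => slope.
have : e / (nu + 1) * nu <= e by rewrite mulrAC ler_pdivrMr //; nra.
lra.
Qed.

Lemma convex_grad_monotone {f gx gy x y} : convex_fun f ->
  has_gradient f gx x -> has_gradient f gy y -> 0 <= dotp (gx - gy) (x - y).
Proof.
move=> cf hx hy; have := convex_grad_ineq y cf hx; have := convex_grad_ineq x cf hy.
by rewrite dotpBl !dotpBr; lra.
Qed.

Lemma prox_uniq {f} {g : vec -> vec} {s : R} {z x x'} : 0 < s -> convex_fun f ->
  (forall x, has_gradient f (g x) x) -> prox f s z x -> prox f s z x' -> x = x'.
Proof.
move=> s0 cf hg px px'; set w := x - x'.
have ew : w = s *: (g x' - g x).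
  rewrite scalerBr -(prox_gradE s0 (hg x) px) -(prox_gradE s0 (hg x') px').
  by rewrite opprB addrC addrA subrK.
have ww : dotp w w = - (s * dotp (g x - g x') w).
  by rewrite {2}ew dotpZr dotpC -opprB dotpNl mulrN.
have w0 : dotp w w <= 0.
  rewrite ww oppr_le0; apply: mulr_ge0; first exact: ltW.
  exact: convex_grad_monotone cf (hg x) (hg x').
apply/eqP; rewrite -subr_eq0; apply/eqP/dotp_eq0.
by apply/le_anti; rewrite w0 dotp_ge0.
Qed.

Lemma prox_grad_shift {f g} {s : R} {x} : 0 < s -> convex_fun f ->
  has_gradient f g x -> prox f s (x + s *: g) x.
Proof.
move=> s0 cf hg y; rewrite -!EFinD lee_fin.
have -> : x + s *: g = x - s *: (- g) by rewrite scalerN opprK.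
rewrite !half_dist2_shift // subrr !dotp0l mul0r !add0r !dotpNr.
have := convex_grad_ineq y cf hg; rewrite (dotpC g).
have : 0 <= dotp (y - x) (y - x) / (2 * s) by rewrite divr_ge0 ?dotp_ge0 ?mulr_ge0 ?ltW.
lra.
Qed.

Lemma convex_smooth_chord {f g} {L s t : R} x v : convex_fun f -> smooth_with f g L ->
  0 < L -> 0 <= s -> s < t ->
  f (x + t *: v) - f (x + s *: v) <= (t - s) * (dotp (g x) v + L * t * dotp v v).
Proof.
move=> cf [hg hL] L0 s0 st; have t0 : 0 < t := le_lt_trans s0 st.
have := convex_grad_ineq (x + s *: v) cf (hg (x + t *: v)).
have -> : x + s *: v - (x + t *: v) = (s - t) *: v.
  by rewrite opprD addrACA subrr add0r scalerBl.
rewrite dotpZr => conv.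
have lip : enorm (g (x + t *: v) - g x) <= L * t * enorm v.
  by have := hL (x + t *: v) x; rewrite [x + _ - x]addrC addKr enormZ gtr0_norm // mulrA.
have := dotp_le_of_enorm_le (mulr_gt0 L0 t0) lip; rewrite dotpBl => gap.
have : (t - s) * dotp (g (x + t *: v)) v <= (t - s) * (dotp (g x) v + L * t * dotp v v).
  by apply: ler_wpM2l; [rewrite subr_ge0 ltW | lra].
lra.
Qed.

(* In place of integrating the gradient along [x, x + v]: the chord bound
   summed over the grid 0, 1/n, ..., k/n. *)
Lemma convex_smooth_grid {f g} {L : R} x v {n k : nat} : convex_fun f ->
  smooth_with f g L -> 0 < L -> (0 < n)%N -> (k <= n)%N ->
  f (x + (k%:R / n%:R) *: v) - f x <=
  k%:R / n%:R * dotp (g x) v + L * dotp v v * (k%:R * (k%:R + 1)) / (2 * n%:R ^+ 2).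
Proof.
move=> cf sm L0 n0; have N0 : 0 < n%:R :> R by rewrite ltr0n.
elim: k => [_|k IH kn].
  by rewrite mul0r scale0r addr0 subrr !mul0r mulr0 mul0r addr0.
have /(_ (k.+1%:R / n%:R)) :=
  convex_smooth_chord x v cf sm L0 (divr_ge0 (ler0n _ k) (ltW N0)).
rewrite ltr_pM2r ?invr_gt0 // ltr_nat ltnSn => /(_ isT).
have := IH (ltnW kn); rewrite -[k.+1%:R]natr1.
set D := dotp (g x) v; set V := dotp v v => grid chord.
have -> : (k%:R + 1) / n%:R * D + L * V * ((k%:R + 1) * (k%:R + 1 + 1)) / (2 * n%:R ^+ 2)
  = (k%:R / n%:R * D + L * V * (k%:R * (k%:R + 1)) / (2 * n%:R ^+ 2)) +
    ((k%:R + 1) / n%:R - k%:R / n%:R) * (D + L * ((k%:R + 1) / n%:R) * V).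
  by field; rewrite gt_eqF.
lra.
Qed.

Lemma convex_smooth_descent {f g} {L : R} x y : convex_fun f -> smooth_with f g L ->
  0 < L -> f y <= f x + dotp (y - x) (g x) + L / 2 * dotp (y - x) (y - x).
Proof.
move=> cf sm L0; rewrite (dotpC (y - x)).
set v := y - x; set D := dotp (g x) v; set V := dotp v v.
have grid n : (0 < n)%N -> f y - f x <= D + L * V / 2 + L * V / (2 * n%:R).
  move=> n0; have N0 : 0 < n%:R :> R by rewrite ltr0n.
  have := convex_smooth_grid x v cf sm L0 n0 (leqnn n).
  rewrite divff ?gt_eqF // scale1r /v addrCA subrr addr0 -/v -/D -/V.
  rewrite mul1r -addrA.
  suff -> : L * V * (n%:R * (n%:R + 1)) / (2 * n%:R ^+ 2) =
    L * V / 2 + L * V / (2 * n%:R) by [].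
  by field; rewrite gt_eqF.
suff : f y - f x <= D + L / 2 * V by lra.
apply/ler_addgt0Pr => e e0; set m := (Num.truncn (L * V / (2 * e))).+1.
have M0 : 0 < m%:R :> R by rewrite ltr0n.
have : L * V / (2 * m%:R) <= e.
  rewrite ler_pdivrMr ?mulr_gt0 //.
  have := @truncnS_gt _ (L * V / (2 * e)); rewrite -/m ltr_pdivrMr ?mulr_gt0 //.
  nra.
have := grid m isT; have -> : L / 2 * V = L * V / 2 by field.
lra.
Qed.

Lemma prox_e_gradP {h : vec -> \bar R} {s : R} {x g} : 0 < s ->
  prox_e h s (x - s *: g) x <->
  forall y, (h x <= h y + (dotp (y - x) g + dotp (y - x) (y - x) / (2 * s))%:E)%E.
Proof.
move=> s0; split => xmin y; move: (xmin y);
  by rewrite !half_dist2_shift // subrr !dotp0l mul0r !add0r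
    (EFinD (dotp (y - x) g + _)) addeA (leeD2rE (x := _%:E)).
Qed.

Lemma proper_prox_fin {h : vec -> \bar R} {s : R} {z x} :
  proper_fun h -> prox_e h s z x -> h x \is a fin_num.
Proof.
move=> [hNy [x0 hx0]] xmin; rewrite fin_numE; apply/andP; split; apply/eqP.
  exact: hNy.
move=> hx; move: (xmin x0); rewrite hx addye //= leye_eq.
by case: (h x0) hx0 (hNy x0).
Qed.

Lemma frechet_limiting_subgrad (h : vec -> \bar R) x v :
  frechet_subgrad h x v -> limiting_subgrad h x v.
Proof.
move=> hv; split; first exact: hv.1.
exists (fun=> x), (fun=> v); split=> //; split; [|split];
  by move=> e e0; exists 0%N => k _; rewrite subrr ?enorm0 ?normr0.
Qed.

End Euclidean.

Section RyuSplitting.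
Context {R : realType} {d : nat}.
Local Notation vec := 'rV[R]_d.
Context {f1 f2 : vec -> R} {f3 : vec -> \bar R} {grad1 grad2 : vec -> vec}.

Lemma ryu_fixpointP {gam alpha lam : R} {z1 z2 x1 x2} :
  0 < gam -> 0 < alpha -> 0 < lam -> convex_fun f1 -> convex_fun f2 ->
  (forall x, has_gradient f1 (grad1 x) x) -> (forall x, has_gradient f2 (grad2 x) x) ->
  prox f1 gam z1 x1 -> prox f2 (gam / alpha) (alpha^-1 *: z2 + x1) x2 ->
  fixpoints (ryu_T f1 f2 f3 gam alpha lam) (z1, z2) <->
  exists x3, prox_e f3 gam (x1 - z1 + x2 - z2) x3 /\ x1 = x2 /\ x2 = x3.
Proof.
move=> g0 a0 lam0 c1 c2 d1 d2 p1 p2; have ga0 : 0 < gam / alpha by rewrite divr_gt0.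
have step_eq0 (z a b : vec) : z = z + lam *: (a - b) -> a = b.
  move=> /(congr1 (fun u => u - z)); rewrite subrr addrC addKr => /esym/eqP.
  by rewrite scaler_eq0 gt_eqF //= subr_eq0 => /eqP.
split.
- case=> _ [_ [x3 [/(prox_uniq g0 c1 d1 p1) <- [/(prox_uniq ga0 c2 d2 p2) <-]]]].
  move=> [p3 E]; case: E => /step_eq0 e31 /step_eq0 e32; exists x3.
  by subst x1 x2; do !split.
- move=> [x3 [p3 [e12 e23]]]; subst x2 x3; exists x1, x1, x1.
  by rewrite subrr scaler0 addr0 addr0.
Qed.

Lemma ryu_fixpoint_prox_arg {gam alpha : R} {z1 z2 x g1 g2} : 0 < gam -> 0 < alpha ->
  has_gradient f1 g1 x -> has_gradient f2 g2 x ->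
  prox f1 gam z1 x -> prox f2 (gam / alpha) (alpha^-1 *: z2 + x) x ->
  x - z1 + x - z2 = x - gam *: (g1 + g2).
Proof.
move=> g0 a0 d1 d2 p1 p2; have ga0 : 0 < gam / alpha by rewrite divr_gt0.
have ez1 : z1 = x + gam *: g1.
  by rewrite -(prox_gradE g0 d1 p1) addrC subrK.
have ez2 : z2 = gam *: g2.
  move: (prox_gradE ga0 d2 p2); rewrite addrK => /(congr1 (GRing.scale alpha)).
  by rewrite !scalerA mulfV ?gt_eqF // scale1r mulrCA mulfV ?gt_eqF // mulr1.
by rewrite ez1 ez2 scalerDr !opprD addrA subrr add0r addrA (addrC (- _) x).
Qed.

Lemma ryu_env_diag {gam alpha : R} {x} : 0 < gam ->
  prox_e f3 gam (x - gam *: (grad1 x + grad2 x)) x ->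
  ryu_env f1 f2 f3 grad1 grad2 gam alpha x x = phi f1 f2 f3 x.
Proof.
move=> g0 /(prox_e_gradP g0) xmin.
have model y : f1 x + dotp (y - x) (grad1 x) + alpha / (2 * gam) * dotp (y - x) (y - x)
    + (f2 x + dotp (y - x) (grad2 x) + (1 - alpha) / (2 * gam) * dotp (y - x) (y - x)) =
    dotp (y - x) (grad1 x + grad2 x) + dotp (y - x) (y - x) / (2 * gam) + (f1 x + f2 x).
  by rewrite dotpDr; field; rewrite gt_eqF.
have -> : phi f1 f2 f3 x = (f3 x + (f1 x + f2 x)%:E)%E by rewrite /phi addeC EFinD.
apply/le_anti/andP; split.
- apply: ereal_inf_lbound; exists x => //.
  by rewrite model subrr !dotp0l mul0r !add0r.
- apply: le_ereal_inf_tmp => _ [y _ <-]; rewrite model (EFinD (dotp _ _ + _)) addeA.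
  exact: leeD2r _ (xmin y).
Qed.

Lemma prox_fixpoint_frechet_subgrad0 {gam : R} {x g1 g2} : 0 < gam ->
  convex_fun f1 -> convex_fun f2 -> has_gradient f1 g1 x -> has_gradient f2 g2 x ->
  proper_fun f3 -> prox_e f3 gam (x - gam *: (g1 + g2)) x ->
  frechet_subgrad (phi f1 f2 f3) x 0.
Proof.
move=> g0 c1 c2 d1 d2 pf xprox.
have [r f3x] : exists r, f3 x = r%:E by apply/EFin_fin_numP; exact: proper_prox_fin pf xprox.
move/(prox_e_gradP g0): xprox => xmin.
split; first by rewrite /phi f3x.
move=> e e0; exists (2 * gam * e); first by rewrite !mulr_gt0.
move=> y yx; have := xmin y; rewrite /phi f3x dotp0l addr0.
case Ey: (f3 y) => [s| |]; last by have := pf.1 y; rewrite Ey.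
  2: by move=> _; rewrite -EFinD addey // leey.
rewrite -!EFinD !lee_fin /= dotpDr (dotpC _ g1) (dotpC _ g2) => prox_ineq.
have := convex_grad_ineq y c1 d1; have := convex_grad_ineq y c2 d2.
have := half_dist2_le g0 yx.
lra.
Qed.

Lemma ryu_env_ge {gam alpha L1 L2 : R} {m : \bar R} x1 x2 : 0 < gam ->
  convex_fun f1 -> convex_fun f2 -> smooth_with f1 grad1 L1 -> smooth_with f2 grad2 L2 ->
  0 < L1 -> 0 < L2 -> gam * L1 <= alpha -> gam * L2 <= 1 - alpha ->
  (forall y, m <= phi f1 f2 f3 y)%E -> (m <= ryu_env f1 f2 f3 grad1 grad2 gam alpha x1 x2)%E.
Proof.
move=> g0 c1 c2 s1 s2 L10 L20 gL1 gL2 mphi.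
apply: le_ereal_inf_tmp => _ [y _ <-]; apply: le_trans (mphi y) _.
rewrite /phi -EFinD addeC; apply: leeD2l; rewrite lee_fin.
have := convex_smooth_descent x1 y c1 s1 L10.
have := convex_smooth_descent x2 y c2 s2 L20.
have curv (L a : R) (u : vec) : gam * L <= a -> L / 2 * dotp u u <= a / (2 * gam) * dotp u u.
  move=> gLa; apply: ler_wpM2r; first exact: dotp_ge0.
  by rewrite ler_pdivlMr ?mulr_gt0 // (_ : L / 2 * _ = gam * L) //; field.
have := curv _ _ (y - x1) gL1; have := curv _ _ (y - x2) gL2.
lra.
Qed.

Lemma minimizer_prox_fixpoint {gam L1 L2 : R} {xs} : 0 < gam -> gam * (L1 + L2) <= 1 ->
  convex_fun f1 -> convex_fun f2 -> smooth_with f1 grad1 L1 -> smooth_with f2 grad2 L2 ->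
  0 < L1 -> 0 < L2 -> proper_fun f3 ->
  (forall x, phi f1 f2 f3 xs <= phi f1 f2 f3 x)%E ->
  prox_e f3 gam (xs - gam *: (grad1 xs + grad2 xs)) xs.
Proof.
move=> g0 gL c1 c2 s1 s2 L10 L20 pf xsmin; apply/(prox_e_gradP g0) => y.
case Ey: (f3 y) => [s| |]; last by have := pf.1 y; rewrite Ey.
  2: by rewrite addye // leey.
have := xsmin y; rewrite /phi Ey.
case Exs: (f3 xs) => [r| |]; last by have := pf.1 xs; rewrite Exs.
  2: by rewrite -!EFinD addey // leye_eq.
rewrite -!EFinD !lee_fin dotpDr => phi_le.
have := convex_smooth_descent xs y c1 s1 L10.
have := convex_smooth_descent xs y c2 s2 L20.
have : (L1 + L2) / 2 * dotp (y - xs) (y - xs) <= dotp (y - xs) (y - xs) / (2 * gam).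
  rewrite -subr_ge0.
  have -> : dotp (y - xs) (y - xs) / (2 * gam) - (L1 + L2) / 2 * dotp (y - xs) (y - xs) =
      dotp (y - xs) (y - xs) * (1 - gam * (L1 + L2)) / (2 * gam).
    by field; rewrite gt_eqF.
  by rewrite divr_ge0 ?mulr_ge0 ?dotp_ge0 ?subr_ge0 // ltW.
lra.
Qed.

End RyuSplitting.

Theorem proposition4 (R : realType) (d : nat)
  (f1 f2 : 'rV[R]_d -> R) (f3 : 'rV[R]_d -> \bar R)
  (grad1 grad2 : 'rV[R]_d -> 'rV[R]_d) (L1 L2 gam alpha lam : R) :
  convex_fun f1 -> convex_fun f2 ->
  0 < L1 -> 0 < L2 ->
  smooth_with f1 grad1 L1 -> smooth_with f2 grad2 L2 ->
  proper_fun f3 -> lsc_fun f3 ->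
  (exists xs : 'rV[R]_d, forall x, (phi f1 f2 f3 xs <= phi f1 f2 f3 x)%E) ->
  0 < gam -> gam < (L1 + L2)^-1 -> 0 < alpha -> 0 < lam ->
  (forall z1 z2 x1 x2 : 'rV[R]_d,
     prox f1 gam z1 x1 ->
     prox f2 (gam / alpha) (alpha^-1 *: z2 + x1) x2 ->
     (fixpoints (ryu_T f1 f2 f3 gam alpha lam) (z1, z2) <->
        exists x3, prox_e f3 gam (x1 - z1 + x2 - z2) x3 /\ x1 = x2 /\ x2 = x3)
     /\
     (forall x3, prox_e f3 gam (x1 - z1 + x2 - z2) x3 -> x1 = x2 -> x2 = x3 ->
        limiting_subgrad (phi f1 f2 f3) x1 0 /\
        phi f1 f2 f3 x1 = ryu_env f1 f2 f3 grad1 grad2 gam alpha x1 x2))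
  /\
  (0 < alpha -> alpha < 1 -> gam <= Num.min (alpha / L1) ((1 - alpha) / L2) ->
   forall xs : 'rV[R]_d, (forall x, (phi f1 f2 f3 xs <= phi f1 f2 f3 x)%E) ->
     (forall z1 z2 x1 x2 : 'rV[R]_d,
        prox f1 gam z1 x1 ->
        prox f2 (gam / alpha) (alpha^-1 *: z2 + x1) x2 ->
        (phi f1 f2 f3 xs <= ryu_env f1 f2 f3 grad1 grad2 gam alpha x1 x2)%E)
     /\
     (exists z1 z2 x1 x2 : 'rV[R]_d,
        prox f1 gam z1 x1 /\
        prox f2 (gam / alpha) (alpha^-1 *: z2 + x1) x2 /\
        ryu_env f1 f2 f3 grad1 grad2 gam alpha x1 x2 = phi f1 f2 f3 xs)).
Proof.
move=> c1 c2 L10 L20 s1 s2 pf _ _ g0 gL a0 lam0.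
have gLle1 : gam * (L1 + L2) <= 1 by rewrite -ler_pdivlMr ?addr_gt0 // mul1r ltW.
split=> [z1 z2 x1 x2 p1 p2|_ _ gmin xs xsmin].
  split; first exact: ryu_fixpointP g0 a0 lam0 c1 c2 s1.1 s2.1 p1 p2.
  move=> x3 p3 e12 e23; subst x2 x3.
  rewrite (ryu_fixpoint_prox_arg g0 a0 (s1.1 x1) (s2.1 x1) p1 p2) in p3.
  split; last exact/esym/(ryu_env_diag g0 p3).
  apply/frechet_limiting_subgrad.
  exact: prox_fixpoint_frechet_subgrad0 g0 c1 c2 (s1.1 x1) (s2.1 x1) pf p3.
move: gmin; rewrite le_min !ler_pdivlMr // => /andP[gL1 gL2].
split=> [z1 z2 x1 x2 _ _|].
  exact: ryu_env_ge x1 x2 g0 c1 c2 s1 s2 L10 L20 gL1 gL2 xsmin.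
have ga0 : 0 < gam / alpha by rewrite divr_gt0.
exists (xs + gam *: grad1 xs), (gam *: grad2 xs), xs, xs; split; [|split].
- exact: prox_grad_shift g0 c1 (s1.1 xs).
- rewrite scalerA (mulrC alpha^-1) (addrC _ xs); exact: prox_grad_shift ga0 c2 (s2.1 xs).
- apply: (ryu_env_diag g0).
  exact: minimizer_prox_fixpoint g0 gLle1 c1 c2 s1 s2 L10 L20 pf xsmin.
Qed.
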